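(* The semigroups of tight and loose roles are both functorial with respect to positional reductions. That is, they define functors \[\mathrm{Role}_{\mathrm{tight}} \colon k\mathbf{FHGraph}_\mathsf{PR} \to \mathbf{SGrp}_\mathsf{Q}\] and \[\mathrm{Role}_{\mathrm{loose}} \colon k\mathbf{FHGraph}_\mathsf{PR} \to \mathbf{SGrp}_\mathsf{Q}.\]
   Context: An F-hypergraph is a pair of sets \((A,H)\) with \(H \subseteq A \times \mathcal{P}(A)\); a hyperedge is written \((a,U)\) with source vertex \(a\) and target set \(U \subseteq A\). A \(k\)-relational F-hypergraph is \(\mathcal{H} = (A,(H_i)_{i=1}^k)\) where each \((A,H_i)\) is an F-hypergraph. A map of \(k\)-relational F-hypergraphs \((A,(H_i)_{i=1}^k) \to (A',(H_i')_{i=1}^k)\) is a function \(f\colon A \to A'\) such that for every \(i\) and every \((a,V) \in H_i\) we have \((f(a), f(V)) \in H_i'\). Such a map reflects hyperedges if for every \(i\), every vertex \(a \in A\) and every hyperedge \((f(a),U) \in H_i'\), there exists \(V \subseteq A\) with \((a,V) \in H_i\) and \(f(V) = U\). A positional reduction is a map of \(k\)-relational F-hypergraphs which is surjective on vertices and reflects hyperedges; \(k\mathbf{FHGraph}_\mathsf{PR}\) denotes the category of \(k\)-relational F-hypergraphs and positional reductions. \(\mathbf{SGrp}_\mathsf{Q}\) denotes the category of semigroups and surjective semigroup homomorphisms. For F-hypergraphs \((A,H_1)\), \((A,H_2)\) on the same set, the tight composite is the F-hypergraph on \(A\) with hyperedge set \[\{(a,U) \mid \text{there exist } (a,V) \in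 H_1 \text{ and } b \in V \text{ such that } (b,U) \in H_2\},\] and the loose composite \(H_2 \diamond H_1\) has hyperedge set \[\Big\{(a,W) \;\Big|\; \text{there exists } (a,V) \in H_1 \text{ such that } W = \bigcup_{b \in V} \bigcup_{(b,U) \in H_2} U\Big\}.\] Both operations are associative on the set of F-hypergraph structures on \(A\). For \(\mathcal{H} = (A,(H_i)_{i=1}^k)\), the semigroup of tight roles \(\mathrm{Role}_{\mathrm{tight}}(\mathcal{H})\) is the semigroup generated by \(H_1,\ldots,H_k\) under tight composition, and the semigroup of loose roles \(\mathrm{Role}_{\mathrm{loose}}(\mathcal{H})\) is the semigroup generated by \(H_1,\ldots,H_k\) under loose composition. (In the paper these are written with a black-diamond subscript and a \(\diamond\) subscript, respectively.) *)

From mathcomp Require Import all_boot.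
Set Implicit Arguments. Unset Strict Implicit. Unset Printing Implicit Defensive.

(* An F-hypergraph structure on A: a set of pairs (a, U) with U a subset of A. *)
Definition fhg (A : Type) := A -> (A -> Prop) -> Prop.

Definition img {A A' : Type} (f : A -> A') (V : A -> Prop) : A' -> Prop :=
  fun y => exists x, V x /\ f x = y.

Definition tight_comp {A : Type} (H1 H2 : fhg A) : fhg A :=
  fun a U => exists V, H1 a V /\ exists b, V b /\ H2 b U.

(* loose composite  H2 <> H1 , written here with H1 first *)
Definition loose_comp {A : Type} (H1 H2 : fhg A) : fhg A :=
  fun a W => exists V, H1 a V /\
    W = (fun x => exists b, V b /\ exists U, H2 b U /\ U x).

Inductive gen (op : forall A : Type, fhg A -> fhg A -> fhg A)
    {A : Type} {k : nat} (H : 'I_k -> fhg A) : fhg A -> Prop :=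
  | gen_base (i : 'I_k) : gen op H (H i)
  | gen_op (S T : fhg A) : gen op H S -> gen op H T -> gen op H (op A S T).

Definition is_PR {k : nat} {A A' : Type} (H : 'I_k -> fhg A) (H' : 'I_k -> fhg A')
    (f : A -> A') : Prop :=
  [/\ (forall y : A', exists x : A, f x = y),
      (forall i a V, H i a V -> H' i (f a) (img f V)) &
      (forall i a U, H' i (f a) U -> exists V, H i a V /\ img f V = U)].

(* Role_op is a functor kFHGraph_PR -> SGrp_Q: each positional reduction f
   gets a surjective semigroup homomorphism Role(H) -> Role(H') (acting on
   generated elements), sending generator H_i to H'_i, and the assignment
   preserves identities and composition. *)
Definition role_functor (op : forall A : Type, fhg A -> fhg A -> fhg A) (k : nat) : Prop :=
  exists Phi : forall (A A' : Type) (H : 'I_k -> fhg A) (H' : 'I_k -> fhg A')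
                 (f : A -> A'), is_PR H H' f -> fhg A -> fhg A',
  (forall A A' H H' f (p : @is_PR k A A' H H' f),
     [/\ (forall S, gen op H S -> gen op H' (Phi A A' H H' f p S)),
         (forall S T, gen op H S -> gen op H T ->
            Phi A A' H H' f p (op A S T) =
            op A' (Phi A A' H H' f p S) (Phi A A' H H' f p T)),
         (forall S', gen op H' S' -> exists S, gen op H S /\ Phi A A' H H' f p S = S') &
         (forall i, Phi A A' H H' f p (H i) = H' i)]) /\
  (forall A H (p : @is_PR k A A H H id) S, gen op H S -> Phi A A H H id p S = S) /\
  (forall A A' A'' H H' H'' f g
          (p : @is_PR k A A' H H' f) (q : @is_PR k A' A'' H' H'' g)
          (r : @is_PR k A A'' H H'' (fun x => g (f x))) S,
     gen op H S ->
     Phi A A'' H H'' (fun x => g (f x)) r S = Phi A' A'' H' H'' g q (Phi A A' H H' f p S)).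

(* A positional reduction f acts on F-hypergraph structures by direct image,
   S |-> {(f a, f V) | (a, V) in S}.  Reflection of hyperedges says that f
   reflects the edges of each generator H_i, whose image is H'_i; both
   composites preserve this reflection property, and for reflected
   structures direct image commutes with the composite.  Hence on the
   generated semigroup the direct image is a homomorphism onto the semigroup
   generated by the H'_i, and it is visibly functorial in f. *)
From mathcomp Require Import all_boot.
From Stdlib Require Import FunctionalExtensionality PropExtensionality.

Set Implicit Arguments.
Unset Strict Implicit.

Lemma pred_ext {A : Type} (P Q : A -> Prop) : (forall x, P x <-> Q x) -> P = Q.
Proof.
by move=> PQ; apply: functional_extensionality => x; apply: propositional_extensionality.
Qed.

Lemma fhg_ext {A : Type} (S T : fhg A) : (forall a U, S a U <-> T a U) -> S = T.
Proof. by move=> ST; apply: functional_extensionality => a; exact: pred_ext. Qed.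

Lemma img_id {A : Type} (V : A -> Prop) : img id V = V.
Proof. by apply: pred_ext => x; split=> [[y [Vy <-]] | Vx] //; exists x. Qed.

Lemma img_comp {A A' A'' : Type} (f : A -> A') (g : A' -> A'') (V : A -> Prop) :
  img (fun x => g (f x)) V = img g (img f V).
Proof.
apply: pred_ext => z; split.
- by case=> x [Vx <-]; exists (f x); split=> //; exists x.
- by case=> y [[x [Vx <-]] <-]; exists x.
Qed.

Definition fhg_img {A A' : Type} (f : A -> A') (S : fhg A) : fhg A' :=
  fun y U => exists a V, S a V /\ f a = y /\ img f V = U.

Definition reflects_edges {A A' : Type} (f : A -> A') (S : fhg A) : Prop :=
  forall a U, fhg_img f S (f a) U -> exists V, S a V /\ img f V = U.

Lemma fhg_img_id {A : Type} (S : fhg A) : fhg_img id S = S.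
Proof.
apply: fhg_ext => a U; split; first by case=> [b [V [SV [<- <-]]]]; rewrite img_id.
by move=> SU; exists a, U; rewrite img_id.
Qed.

Lemma fhg_img_comp {A A' A'' : Type} (f : A -> A') (g : A' -> A'') (S : fhg A) :
  fhg_img (fun x => g (f x)) S = fhg_img g (fhg_img f S).
Proof.
apply: fhg_ext => z U; split.
- case=> [a [V [SV [<- <-]]]]; rewrite img_comp.
  by exists (f a), (img f V); split=> //; exists a, V.
- case=> [b [V' [[a [V [SV [<- <-]]]] [<- <-]]]].
  by exists a, V; rewrite img_comp.
Qed.

Section TightComposite.

Variables (A A' : Type) (f : A -> A') (S T : fhg A).

Lemma reflects_edges_tight :
  reflects_edges f S -> reflects_edges f T -> reflects_edges f (tight_comp S T).
Proof.
move=> reflS reflT a U [a0 [W [[V [SV [b [Vb TW]]]] [fa0 fW]]]].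
have [V1 [SV1 fV1]] : exists V1, S a V1 /\ img f V1 = img f V.
  by apply: reflS; exists a0, V.
have [b1 [V1b1 fb1]] : img f V1 (f b) by rewrite fV1; exists b.
have [W1 [TW1 fW1]] : exists W1, T b1 W1 /\ img f W1 = U.
  by apply: reflT; rewrite fb1; exists b, W.
by exists W1; split=> //; exists V1; split=> //; exists b1.
Qed.

Lemma fhg_img_tight :
  reflects_edges f T -> fhg_img f (tight_comp S T) = tight_comp (fhg_img f S) (fhg_img f T).
Proof.
move=> reflT; apply: fhg_ext => y U; split.
- case=> [a [W [[V [SV [b [Vb TW]]]] [<- <-]]]].
  exists (img f V); split; first by exists a, V.
  by exists (f b); split; [exists b | exists b, W].
- case=> [_ [[a [V [SV [<- <-]]]] [_ [[b [Vb <-]] fTU]]]].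
  have [W [TW <-]] := reflT _ _ fTU.
  by exists a, W; split=> //; exists V; split=> //; exists b.
Qed.

End TightComposite.

Section LooseComposite.

Variables (A A' : Type) (f : A -> A') (T : fhg A).

Definition loose_target (V : A -> Prop) : A -> Prop :=
  fun x => exists b, V b /\ exists U, T b U /\ U x.

Lemma img_loose_target (V : A -> Prop) : reflects_edges f T ->
  img f (loose_target V) =
  (fun x => exists b, img f V b /\ exists U, fhg_img f T b U /\ U x).
Proof.
move=> reflT; apply: pred_ext => y; split.
- case=> x [[b [Vb [U [TU Ux]]]] <-].
  exists (f b); split; first by exists b.
  by exists (img f U); split; [exists b, U | exists x].
- case=> _ [[b [Vb <-]] [U' [fTU U'y]]].
  have [U [TU fU]] := reflT _ _ fTU.
  have [x [Ux <-]] : img f U y by rewrite fU.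
  by exists x; split=> //; exists b; split=> //; exists U.
Qed.

Variable S : fhg A.

Lemma reflects_edges_loose :
  reflects_edges f S -> reflects_edges f T -> reflects_edges f (loose_comp S T).
Proof.
move=> reflS reflT a X [a0 [_ [[V [SV ->]] [fa0 <-]]]].
have [V1 [SV1 fV1]] : exists V1, S a V1 /\ img f V1 = img f V.
  by apply: reflS; exists a0, V.
exists (loose_target V1); split; first by exists V1.
by rewrite !img_loose_target // fV1.
Qed.

Lemma fhg_img_loose :
  reflects_edges f T -> fhg_img f (loose_comp S T) = loose_comp (fhg_img f S) (fhg_img f T).
Proof.
move=> reflT; apply: fhg_ext => y X; split.
- case=> [a [_ [[V [SV ->]] [<- <-]]]].
  by exists (img f V); split; [exists a, V | exact: img_loose_target].
- case=> [_ [[a [V [SV [<- <-]]]] ->]].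
  exists a, (loose_target V); split; first by exists V.
  by split=> //; exact: img_loose_target.
Qed.

End LooseComposite.

Section PositionalReduction.

Variables (k : nat) (A A' : Type) (H : 'I_k -> fhg A) (H' : 'I_k -> fhg A').
Variables (f : A -> A') (PRf : is_PR H H' f).

Lemma PR_img_base (i : 'I_k) : fhg_img f (H i) = H' i.
Proof.
case: PRf => surj_f preserve reflect; apply: fhg_ext => y U; split.
- by case=> [a [V [HV [<- <-]]]]; apply: preserve.
- have [a <-] := surj_f y; move=> /reflect[V [HV fV]].
  by exists a, V.
Qed.

Lemma PR_reflects_base (i : 'I_k) : reflects_edges f (H i).
Proof. by case: PRf => _ _ reflect a U; rewrite PR_img_base; apply: reflect. Qed.

Variable op : forall B : Type, fhg B -> fhg B -> fhg B.
Hypothesis reflects_edges_op : forall S T,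
  reflects_edges f S -> reflects_edges f T -> reflects_edges f (@op A S T).
Hypothesis fhg_img_op : forall S T, reflects_edges f S -> reflects_edges f T ->
  fhg_img f (@op A S T) = @op A' (fhg_img f S) (fhg_img f T).

Lemma gen_reflects_edges S : gen op H S -> reflects_edges f S.
Proof.
by elim=> [i | S1 S2 _ refl1 _ refl2]; [exact: PR_reflects_base | exact: reflects_edges_op].
Qed.

Lemma gen_fhg_img S : gen op H S -> gen op H' (fhg_img f S).
Proof.
elim=> [i | S1 S2 gen1 img1 gen2 img2]; first by rewrite PR_img_base; exact: gen_base.
by rewrite fhg_img_op; [exact: gen_op | exact: gen_reflects_edges ..].
Qed.

Lemma gen_fhg_img_surj S' : gen op H' S' -> exists S, gen op H S /\ fhg_img f S = S'.
Proof.
elim=> [i | S1' S2' _ [S1 [gen1 <-]] _ [S2 [gen2 <-]]].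
  by exists (H i); split; [exact: gen_base | exact: PR_img_base].
exists (@op A S1 S2); split; first exact: gen_op.
by rewrite fhg_img_op //; exact: gen_reflects_edges.
Qed.

End PositionalReduction.

Lemma role_functor_fhg_img (op : forall A : Type, fhg A -> fhg A -> fhg A) (k : nat) :
  (forall A A' (f : A -> A') S T, reflects_edges f S -> reflects_edges f T ->
     reflects_edges f (op A S T)) ->
  (forall A A' (f : A -> A') S T, reflects_edges f S -> reflects_edges f T ->
     fhg_img f (op A S T) = op A' (fhg_img f S) (fhg_img f T)) ->
  role_functor op k.
Proof.
move=> reflects_op img_op; exists (fun A A' H H' f _ => fhg_img f).
split; [| split] => /=.
- move=> A A' H H' f PRf.
  have [refl_f img_f] := (reflects_op A A' f, img_op A A' f).
  have gen_refl := gen_reflects_edges PRf refl_f.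
  split.
  + by move=> S; apply: (gen_fhg_img PRf refl_f img_f).
  + by move=> S T /gen_refl reflS /gen_refl reflT; exact: img_f.
  + by move=> S'; apply: (gen_fhg_img_surj PRf refl_f img_f).
  + exact: PR_img_base.
- by move=> A H _ S _; exact: fhg_img_id.
- by move=> *; exact: fhg_img_comp.
Qed.

Theorem theorem6p11 (k : nat) :
  role_functor (@tight_comp) k /\ role_functor (@loose_comp) k.
Proof.
split; apply: role_functor_fhg_img => A A' f S T reflS reflT.
- exact: reflects_edges_tight.
- exact: fhg_img_tight.
- exact: reflects_edges_loose.
- exact: fhg_img_loose.
Qed.
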